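(* Let $G$ be a simple undirected connected graph on vertices $u_1,\dots,u_n$ with Laplacian $L$, let $u_a\neq u_b$ satisfy $N(u_a)\setminus\{u_b\}=N(u_b)\setminus\{u_a\}$, let $M=(\mathbf e_a-\mathbf e_b)(\mathbf e_a-\mathbf e_b)^T$, $\alpha\in\mathbb R$ and $L^\alpha=L+\alpha M$. Suppose $L$ is periodic at vertex $u_p$ at time $\tau\neq 0$. Then: (1) if $p\in\{a,b\}$ and $2\alpha\tau\in\pi(2\mathbb Z+1)$, then $L^\alpha$ exhibits perfect state transfer between $u_a$ and $u_b$ at time $\tau$; (2) if $p\notin\{a,b\}$, then $L^\alpha$ is periodic at $u_p$ at time $\tau$. *)

From HB Require Import structures.
From mathcomp Require Import all_boot all_order all_algebra.
From mathcomp Require Import all_classical all_reals all_analysis.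
Set Implicit Arguments.
Unset Strict Implicit.
Unset Printing Implicit Defensive.
Import Order.TTheory GRing.Theory Num.Theory.
Import numFieldNormedType.Exports.
Local Open Scope ring_scope.

Section QW.
Variable R : realType.
Variable n : nat.

(* k-th power of a square matrix (avoids needing n = m.+1 for the ring structure) *)
Definition mxpow (H : 'M[R]_n) (k : nat) : 'M[R]_n := iter k (mulmx H) 1%:M.

(* Transition matrix U(t) = exp(-i t H) = sum_m (-i t)^m H^m / m!, for a real
   symmetric H, split into real and imaginary parts:
     Re U(t) = sum_k (-1)^k t^(2k) H^(2k) / (2k)!
     Im U(t) = - sum_k (-1)^k t^(2k+1) H^(2k+1) / (2k+1)!   *)
Definition qw_re (H : 'M[R]_n) (t : R) (i j : 'I_n) : R :=
  let u : R^nat := fun k : nat =>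
    (-1) ^+ k * t ^+ (2 * k) / ((2 * k)`!)%:R * mxpow H (2 * k) i j in
  limn (series u : nat -> R).

Definition qw_im (H : 'M[R]_n) (t : R) (i j : 'I_n) : R :=
  let u : R^nat := fun k : nat =>
    (-1) ^+ k * t ^+ (2 * k).+1 / (((2 * k).+1)`!)%:R * mxpow H (2 * k).+1 i j in
  - limn (series u : nat -> R).

Definition qw_abs2 (H : 'M[R]_n) (t : R) (i j : 'I_n) : R :=
  qw_re H t i j ^+ 2 + qw_im H t i j ^+ 2.

Definition periodic_at (H : 'M[R]_n) (u : 'I_n) (t : R) : Prop :=
  qw_abs2 H t u u = 1.

Definition pst (H : 'M[R]_n) (u v : 'I_n) (t : R) : Prop :=
  qw_abs2 H t u v = 1.

Definition laplacian (e : rel 'I_n) : 'M[R]_n :=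
  \matrix_(i, j) (if i == j then (#|[set k | e i k]|)%:R
                  else if e i j then -1 else 0).

Definition edge_mx (a b : 'I_n) : 'M[R]_n :=
  let v : 'cV[R]_n := delta_mx a 0 - delta_mx b 0 in v *m v^T.

End QW.

Definition simple_connected_graph (n : nat) (e : rel 'I_n) : Prop :=
  symmetric e /\ irreflexive e /\ (forall x y : 'I_n, connect e x y).

Definition nbhd (n : nat) (e : rel 'I_n) (u : 'I_n) : {set 'I_n} := [set w | e u w].

(* Let u_a, u_b be twins (N(u_a) \ {u_b} = N(u_b) \ {u_a}) and v = e_a - e_b,
   so that M = v v^T.  Twins make v an eigenvector of L, with eigenvalue
   lam = L_aa - L_ab, hence an eigenvector of H = L + alpha M with eigenvalue
   mu = lam + 2 alpha; moreover H and L agree on every vector x with x_a = x_b,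
   and so do all their powers.  Writing e_a, e_b as (s +- v)/2 with s = e_a + e_b
   this gives, for every m,
       (H^m)_ab = (L^m)_aa - (lam^m + mu^m)/2   and   (H^m)_pp = (L^m)_pp
   (the latter for p outside {a, b}).  The real and imaginary parts of
   U(t) = exp(-itH) are the cosine and sine series of the entries of H^m, and
   these series are linear in geometrically bounded coefficient sequences and
   send (x^m)_m to cos(tx), sin(tx).  When t mu - t lam is an odd multiple of pi
   the cosine and sine contributions of lam and mu cancel, so |U_H(t)_ab| =
   |U_L(t)_aa|, which is 1 when L is periodic at u_a (the case u_b follows by
   swapping a and b, using the symmetry of H).  For p outside {a, b} the
   entries agree term by term. *)
From HB Require Import structures.
From mathcomp Require Import all_boot all_order all_algebra.
From mathcomp Require Import all_classical all_reals all_analysis.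
From mathcomp Require Import ring.
Import Order.TTheory GRing.Theory Num.Theory.
Import numFieldNormedType.Exports.
Set Implicit Arguments.
Unset Strict Implicit.
Unset Printing Implicit Defensive.
Local Open Scope ring_scope.

Section TrigSeries.
Variable R : realType.
Implicit Types (s : nat -> nat) (t x y : R) (P : nat -> R).

(* The series sum_k (-1)^k t^(s k)/(s k)! P(s k): for s k = 2k it is the
   cosine series, for s k = 2k+1 the sine series, of the coefficients P. *)
Definition trig_series s t P : R^nat :=
  fun k => (-1) ^+ k * t ^+ s k / ((s k)`!)%:R * P (s k).

Definition trig_sum s t P : R := limn (series (trig_series s t P)).

Definition geom_bounded P := exists K : R, forall m, `|P m| <= K ^+ m.

Definition parity_index s := forall k, s k = k.*2 \/ s k = k.*2.+1.

Lemma geom_bounded_exp x : geom_bounded (fun m => x ^+ m).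
Proof. by exists `|x| => m; rewrite normrX. Qed.

Lemma exp_coeff_le_group y k j : 0 <= y -> j = k.*2 \/ j = k.*2.+1 ->
  exp_coeff y j <= \sum_(k * 2 <= i < k.+1 * 2) exp_coeff y i.
Proof.
move=> y0 hj; rewrite mulSn add2n big_nat_recr ?leqnSn // big_nat1 /= muln2.
by case: hj => ->; rewrite ?lerDl ?lerDr exp_coeff_ge0.
Qed.

(* Absolute convergence, by comparison with the exponential series of K|t|
   grouped in blocks of two. *)
Lemma trig_series_cvg s t P : parity_index s -> geom_bounded P ->
  cvgn (series (trig_series s t P)).
Proof.
move=> hs [K hP].
have K0 : 0 <= K by have := hP 1%N; rewrite expr1; exact: le_trans.
have y0 : 0 <= K * `|t| by rewrite mulr_ge0.
have grouped := cvgP _ (cvg_series_cvg_series_group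
  (is_cvg_series_exp_coeff (K * `|t|)) (isT : (0 < 2)%N)).
apply/normed_cvg/(series_le_cvg _ _ _ grouped) => k /=.
- exact: normr_ge0.
- by rewrite sumr_ge0 // => i _; rewrite exp_coeff_ge0.
- apply: le_trans (exp_coeff_le_group y0 (hs k)).
  rewrite /trig_series /exp_coeff /= !normrM normrX normrN1 expr1n mul1r.
  rewrite normfV normrX [`|_%:R|]ger0_norm // exprMn mulrAC.
  by rewrite ler_wpM2r ?invr_ge0 // [leLHS]mulrC ler_wpM2r ?exprn_ge0.
Qed.

Lemma trig_sum_sub_half_powers s t P x y : parity_index s -> geom_bounded P ->
  trig_sum s t (fun m => P m - 2^-1 * (x ^+ m + y ^+ m)) =
  trig_sum s t P -
  2^-1 * (trig_sum s t (fun m => x ^+ m) + trig_sum s t (fun m => y ^+ m)).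
Proof.
move=> hs hP.
have cvg_exp z : cvgn (series (trig_series s t (fun m => z ^+ m))).
  exact: trig_series_cvg hs (geom_bounded_exp z).
have cvg_sum : cvgn (series (trig_series s t (fun m => x ^+ m) +
                             trig_series s t (fun m => y ^+ m))).
  exact: is_cvg_seriesD.
rewrite /trig_sum.
have -> : trig_series s t (fun m => P m - 2^-1 * (x ^+ m + y ^+ m)) =
    trig_series s t P - 2^-1 *: (trig_series s t (fun m => x ^+ m) +
                                 trig_series s t (fun m => y ^+ m)).
  by apply/funext => k; rewrite /trig_series !fctE /GRing.scale /=; ring.
rewrite (lim_seriesB (f := trig_series s t P)); last exact: is_cvg_seriesZ.
  by rewrite lim_seriesZ // lim_seriesD.
exact: trig_series_cvg hs hP.
Qed.

Lemma trig_sum_cos t x :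
  trig_sum (fun k => 2 * k)%N t (fun m => x ^+ m) = cos (t * x).
Proof.
apply/cvg_lim => //.
have -> : trig_series (fun k => 2 * k)%N t (fun m => x ^+ m) = cos_coeff' (t * x).
  by apply/funext => k; rewrite /trig_series /cos_coeff' -mul2n exprMn -exprnP; ring.
exact: cvg_cos_coeff'.
Qed.

Lemma trig_sum_sin t x :
  trig_sum (fun k => (2 * k).+1)%N t (fun m => x ^+ m) = sin (t * x).
Proof.
apply/cvg_lim => //.
have -> : trig_series (fun k => (2 * k).+1)%N t (fun m => x ^+ m) = sin_coeff' (t * x).
  by apply/funext => k; rewrite /trig_series /sin_coeff' -mul2n exprMn -exprnP; ring.
exact: cvg_sin_coeff'.
Qed.

End TrigSeries.

Lemma periodicz (U V : zmodType) (f : U -> V) (T : U) : periodic f T ->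
  forall (z : int) x, f (x + T *~ z) = f x.
Proof.
move=> fT [m|m] x; first exact: periodicn.
by rewrite -[in RHS](subrK (T *+ m.+1) x) periodicn // NegzE mulrNz.
Qed.

Lemma alternating_odd (U : comNzRingType) (V : pzRingType) (f : U -> V) (T : U) :
  alternating f T -> forall (z : int) x, f (x + T * (2 * z%:~R + 1)) = - f x.
Proof.
move=> fT z x.
have f2T : periodic f (T *+ 2) by move=> y; rewrite mulr2n addrA !fT opprK.
have -> : T * (2 * z%:~R + 1) = T *+ 2 *~ z + T.
  by rewrite -mulrzr -mulr_natr; ring.
by rewrite addrA fT periodicz.
Qed.

Section MatrixPowers.
Variables (R : realType) (n : nat).
Implicit Types (H : 'M[R]_n) (x : 'cV[R]_n).

Lemma mxpowSr H m : mxpow H m.+1 = mxpow H m *m H.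
Proof.
elim: m => [|m IH]; first by rewrite /mxpow /= mulmx1 mul1mx.
by rewrite [LHS]/mxpow iterS -/(mxpow H m.+1) {1}IH mulmxA.
Qed.

Lemma mxpow_tr H m : (mxpow H m)^T = mxpow H^T m.
Proof.
elim: m => [|m IH]; first exact: trmx1.
by rewrite [mxpow H m.+1]mxpowSr trmx_mul IH.
Qed.

Lemma mxpow_eigen H x c m : H *m x = c *: x -> mxpow H m *m x = c ^+ m *: x.
Proof.
move=> Hx; elim: m => [|m IH]; first by rewrite mul1mx scale1r.
by rewrite -mulmxA IH -scalemxAr Hx scalerA exprSr.
Qed.

Lemma mxpow_agree H1 H2 x m :
  (forall k, H1 *m (mxpow H2 k *m x) = H2 *m (mxpow H2 k *m x)) ->
  mxpow H1 m *m x = mxpow H2 m *m x.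
Proof.
move=> h; elim: m => [//|m IH].
by rewrite /mxpow !iterS -/(mxpow H1 m) -/(mxpow H2 m) -!mulmxA IH h.
Qed.

Lemma mxpow_bound H m i j : `|mxpow H m i j| <= (\sum_k \sum_l `|H k l|) ^+ m.
Proof.
set K := \sum_k _.
have row_le i0 : \sum_l `|H i0 l| <= K.
  rewrite /K [leRHS](bigD1 i0) //= lerDl.
  by rewrite sumr_ge0 // => k _; rewrite sumr_ge0.
elim: m i j => [|m IH] i j.
  by rewrite /mxpow /= mxE; case: (i == j); rewrite ?normr1 ?normr0.
rewrite /mxpow iterS -/(mxpow H m) mxE exprS.
apply: le_trans (ler_norm_sum _ _ _) _.
apply: (@le_trans _ _ (\sum_l `|H i l| * K ^+ m)).
  by apply: ler_sum => l _; rewrite normrM ler_wpM2l.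
rewrite -mulr_suml ler_wpM2r ?exprn_ge0 ?row_le //.
by rewrite (le_trans _ (row_le i)) ?sumr_ge0.
Qed.

Lemma mul_delta_col (A : 'M[R]_n) i j : (A *m (delta_mx j 0 : 'cV_n)) i 0 = A i j.
Proof. by rewrite -colE mxE. Qed.

End MatrixPowers.

Section WalkAmplitudes.
Variables (R : realType) (n : nat).
Implicit Types (H : 'M[R]_n) (t lam mu : R).

Lemma qw_reE H t i j :
  qw_re H t i j = trig_sum (fun k => 2 * k)%N t (fun m => mxpow H m i j).
Proof. by []. Qed.

Lemma qw_imE H t i j :
  qw_im H t i j = - trig_sum (fun k => (2 * k).+1)%N t (fun m => mxpow H m i j).
Proof. by []. Qed.

Lemma parity_index_even : parity_index (fun k => 2 * k)%N.
Proof. by move=> k; left; rewrite mul2n. Qed.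

Lemma parity_index_odd : parity_index (fun k => (2 * k).+1)%N.
Proof. by move=> k; right; rewrite mul2n. Qed.

Lemma geom_bounded_mxpow H i j : geom_bounded (fun m => mxpow H m i j).
Proof. by eexists => m; apply: mxpow_bound. Qed.

Lemma qw_abs2_congr H H' t i j k l :
  (forall m, mxpow H' m i j = mxpow H m k l) -> qw_abs2 H' t i j = qw_abs2 H t k l.
Proof.
move=> entries; rewrite /qw_abs2 !qw_reE !qw_imE.
by have -> : (fun m => mxpow H' m i j) = (fun m => mxpow H m k l) by exact: funext.
Qed.

Lemma qw_abs2_sym H t i j : H^T = H -> qw_abs2 H t i j = qw_abs2 H t j i.
Proof.
by move=> Hsym; apply: qw_abs2_congr => m; rewrite -[in RHS]Hsym -mxpow_tr mxE.
Qed.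

(* Key analytic step: removing half of two exponential modes whose phases at
   time t differ by an odd multiple of pi does not change the amplitude. *)
Lemma qw_abs2_shift H H' t i j k l lam mu (z : int) :
  (forall m, mxpow H' m i j = mxpow H m k l - 2^-1 * (lam ^+ m + mu ^+ m)) ->
  t * mu = t * lam + pi * (2 * z%:~R + 1) ->
  qw_abs2 H' t i j = qw_abs2 H t k l.
Proof.
move=> entries shift.
have cos_part : trig_sum (fun k => 2 * k)%N t (fun m => mxpow H' m i j) =
                trig_sum (fun k => 2 * k)%N t (fun m => mxpow H m k l).
  rewrite (funext entries).
  rewrite (trig_sum_sub_half_powers _ _ _ parity_index_even (geom_bounded_mxpow H k l)).
  by rewrite !(trig_sum_cos t) shift (alternating_odd (@cosDpi R)) addrN mulr0 subr0.
have sin_part : trig_sum (fun k => (2 * k).+1)%N t (fun m => mxpow H' m i j) =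
                trig_sum (fun k => (2 * k).+1)%N t (fun m => mxpow H m k l).
  rewrite (funext entries).
  rewrite (trig_sum_sub_half_powers _ _ _ parity_index_odd (geom_bounded_mxpow H k l)).
  by rewrite !(trig_sum_sin t) shift (alternating_odd (@sinDpi R)) addrN mulr0 subr0.
by rewrite /qw_abs2 !qw_reE !qw_imE cos_part sin_part.
Qed.

End WalkAmplitudes.

Section EdgeMatrix.
Variables (R : realType) (n : nat) (a b : 'I_n).

Definition edge_vec : 'cV[R]_n := delta_mx a 0 - delta_mx b 0.

Lemma edge_vecE i : edge_vec i 0 = (i == a)%:R - (i == b)%:R.
Proof. by rewrite !mxE !andbT. Qed.

Lemma edge_vec_tr_mul (x : 'cV[R]_n) : edge_vec^T *m x = (x a 0 - x b 0)%:M.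
Proof.
rewrite /edge_vec linearB /= !trmx_delta mulmxBl -!rowE.
by apply/matrixP => i j; rewrite !ord1 !mxE eqxx mulr1n.
Qed.

Lemma edge_mx_mul (x : 'cV[R]_n) : edge_mx R a b *m x = (x a 0 - x b 0) *: edge_vec.
Proof. by rewrite /edge_mx -/edge_vec -mulmxA edge_vec_tr_mul mul_mx_scalar. Qed.

End EdgeMatrix.

Lemma edge_mx_sym (R : realType) n (a b : 'I_n) : edge_mx R b a = edge_mx R a b.
Proof. by rewrite /edge_mx -opprB linearN /= mulNmx mulmxN opprK. Qed.

Lemma edge_mx_tr (R : realType) n (a b : 'I_n) : (edge_mx R a b)^T = edge_mx R a b.
Proof. by rewrite /edge_mx trmx_mul trmxK. Qed.

Lemma laplacian_tr (R : realType) n (e : rel 'I_n) :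
  symmetric e -> (laplacian R e)^T = laplacian R e.
Proof.
by move=> esym; apply/matrixP => i j; rewrite !mxE eq_sym esym; case: eqVneq => // ->.
Qed.

Lemma perturbed_laplacian_tr (R : realType) n (e : rel 'I_n) (a b : 'I_n) (alpha : R) :
  symmetric e ->
  (laplacian R e + alpha *: edge_mx R a b)^T = laplacian R e + alpha *: edge_mx R a b.
Proof. by move=> esym; rewrite linearD linearZ /= laplacian_tr // edge_mx_tr. Qed.

Section TwinVertices.
Variables (R : realType) (n : nat) (e : rel 'I_n) (a b : 'I_n) (alpha : R).
Hypothesis esym : symmetric e.
Hypothesis ab : a != b.
Hypothesis twin : nbhd e a :\ b = nbhd e b :\ a.

Let L := laplacian R e.
Let H := L + alpha *: edge_mx R a b.
Let v := edge_vec R a b.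
Let lam := L a a - L a b.
Implicit Types x : 'cV[R]_n.

Lemma twin_degree : #|[set k | e a k]| = #|[set k | e b k]|.
Proof.
rewrite (cardsD1 b [set k | e a k]) (cardsD1 a [set k | e b k]).
by move: twin; rewrite /nbhd => ->; rewrite !inE esym.
Qed.

Lemma twin_adj i : i != a -> i != b -> e i a = e i b.
Proof.
move=> ia ib; have : (i \in nbhd e a :\ b) = (i \in nbhd e b :\ a) by rewrite twin.
by rewrite !inE ia ib /= ![e _ i]esym.
Qed.

Lemma laplacian_twin_eigen : L *m v = lam *: v.
Proof.
apply/matrixP => i j; rewrite !ord1 -[v]/(edge_vec R a b) /edge_vec mulmxBr.
rewrite [LHS]mxE -!colE !mxE !eqxx !andbT /lam /L !mxE eqxx (negPf ab).
have ba : b != a by rewrite eq_sym.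
have [->|ia] := eqVneq i a; first by rewrite (negPf ab) /=; ring.
have [->|ib] := eqVneq i b.
  by rewrite ?(negPf ab) ?(negPf ba) esym twin_degree /=; ring.
by rewrite twin_adj // subrr /= subrr mulr0.
Qed.

Lemma edge_vec_a : v a 0 = 1.
Proof. by rewrite edge_vecE eqxx (negPf ab) subr0. Qed.

Lemma edge_vec_b : v b 0 = -1.
Proof. by rewrite edge_vecE eqxx eq_sym (negPf ab) sub0r. Qed.

Lemma perturbed_mul x : H *m x = L *m x + (alpha * (x a 0 - x b 0)) *: v.
Proof. by rewrite mulmxDl -scalemxAl edge_mx_mul scalerA. Qed.

Lemma perturbed_twin_eigen : H *m v = (lam + 2 * alpha) *: v.
Proof.
rewrite perturbed_mul laplacian_twin_eigen edge_vec_a edge_vec_b -scalerDl.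
by congr (_ *: _); ring.
Qed.

(* Since L is symmetric with eigenvector v, the functional x |-> x_a - x_b is
   an eigenvector of L on the left. *)
Lemma laplacian_pow_diff x m :
  (mxpow L m *m x) a 0 - (mxpow L m *m x) b 0 = lam ^+ m * (x a 0 - x b 0).
Proof.
have : v^T *m (mxpow L m *m x) = lam ^+ m *: (v^T *m x).
  rewrite mulmxA -[v^T *m _]trmxK trmx_mul trmxK mxpow_tr laplacian_tr //.
  by rewrite (mxpow_eigen _ laplacian_twin_eigen) linearZ /= -scalemxAl.
by rewrite !edge_vec_tr_mul => /matrixP /(_ 0 0); rewrite !mxE eqxx !mulr1n.
Qed.

Lemma perturbed_pow_agree x m : x a 0 = x b 0 -> mxpow H m *m x = mxpow L m *m x.
Proof.
move=> xab; apply: mxpow_agree => k.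
by rewrite perturbed_mul laplacian_pow_diff xab subrr !mulr0 scale0r addr0.
Qed.

(* Decompose e_a, e_b as (s +- v)/2 with s = e_a + e_b balanced. *)
Lemma perturbed_transfer_entry m :
  mxpow H m a b = mxpow L m a a - 2^-1 * (lam ^+ m + (lam + 2 * alpha) ^+ m).
Proof.
set s : 'cV[R]_n := delta_mx a 0 + delta_mx b 0.
have s_twin : s a 0 = s b 0 by rewrite !mxE !eqxx eq_sym addrC.
have ea : delta_mx a 0 = 2^-1 *: (s + v).
  by apply/matrixP => i j; rewrite !mxE; field.
have eb : delta_mx b 0 = 2^-1 *: (s - v).
  by apply/matrixP => i j; rewrite !mxE; field.
clearbody s.
have Hb : mxpow H m *m delta_mx b 0 =
          2^-1 *: (mxpow L m *m s - (lam + 2 * alpha) ^+ m *: v).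
  rewrite eb -scalemxAr mulmxBr perturbed_pow_agree //.
  by rewrite (mxpow_eigen m perturbed_twin_eigen).
have La : mxpow L m *m delta_mx a 0 = 2^-1 *: (mxpow L m *m s + lam ^+ m *: v).
  by rewrite ea -scalemxAr mulmxDr (mxpow_eigen m laplacian_twin_eigen).
rewrite -mul_delta_col Hb -[mxpow L m a a]mul_delta_col La.
by rewrite !mxE !eqxx (negPf ab) /=; field.
Qed.

Lemma perturbed_diag_entry p : p != a -> p != b ->
  forall m, mxpow H m p p = mxpow L m p p.
Proof.
move=> pa pb m; rewrite -!mul_delta_col perturbed_pow_agree //.
by rewrite !mxE eq_sym (negPf pa) eq_sym (negPf pb).
Qed.

End TwinVertices.

Lemma twin_perturbed_transfer (R : realType) n (e : rel 'I_n) (a b : 'I_n)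
    (alpha tau : R) (z : int) :
  symmetric e -> a != b -> nbhd e a :\ b = nbhd e b :\ a ->
  2 * alpha * tau = pi * (2 * z%:~R + 1) ->
  qw_abs2 (laplacian R e + alpha *: edge_mx R a b) tau a b =
  qw_abs2 (laplacian R e) tau a a.
Proof.
move=> esym ab twin odd_phase.
apply: (qw_abs2_shift (z := z) (perturbed_transfer_entry alpha esym ab twin)).
by rewrite -odd_phase; ring.
Qed.

Theorem theorem2p4 (R : realType) (n : nat) (e : rel 'I_n) (a b p : 'I_n)
    (alpha tau : R) :
  simple_connected_graph e ->
  a != b ->
  nbhd e a :\ b = nbhd e b :\ a ->
  tau != 0 ->
  periodic_at (laplacian R e) p tau ->
  ((p \in [:: a; b]) ->
     (exists k : int, 2 * alpha * tau = pi * (2 * k%:~R + 1)) ->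
     pst (laplacian R e + alpha *: edge_mx R a b) a b tau)
  /\
  ((p \notin [:: a; b]) ->
     periodic_at (laplacian R e + alpha *: edge_mx R a b) p tau).
Proof.
move=> [esym _] ab twin _ periodic_p; split.
  rewrite !inE /pst => /orP[]/eqP p_twin [z odd_phase]; subst p.
    by rewrite (twin_perturbed_transfer esym ab twin odd_phase); exact: periodic_p.
  have ba : b != a by rewrite eq_sym.
  rewrite qw_abs2_sym ?perturbed_laplacian_tr // -edge_mx_sym.
  rewrite (twin_perturbed_transfer esym ba (Logic.eq_sym twin) odd_phase).
  exact: periodic_p.
rewrite !inE negb_or => /andP[pa pb].
rewrite /periodic_at (qw_abs2_congr _ (perturbed_diag_entry alpha esym ab twin pa pb)).
exact: periodic_p.
Qed.
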